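(* Let $q$ be a prime power, let $\varepsilon = \frac{1}{9q}$, and let $G \in \mathbb{F}_q^{N\times n}$ be such that every nonzero vector of the form $Gx$, $x\in\mathbb{F}_q^n\setminus\{0\}$, has Hamming weight in $[d,(1+\varepsilon)d]$ for some integer $d\ge 1$. Let $Q_1,\dots,Q_m\in\mathbb{F}_q^{n\times n}$ and define $$V := \{GXG^T : X \in \mathbb{F}_q^{n\times n},\ X^T = X,\ Q_1(X) = 0,\dots,Q_m(X)=0\}\subseteq \mathbb{F}_q^{N\times N}.$$ Then: (i) if there is a nonzero $x \in \{0,1\}^n$ with $Q_\ell(xx^T)=0$ for all $\ell$, then $V$ contains a nonzero matrix $Y$ with $\|Y\|_0 \le (1+\frac{1}{3q})d^2$; (ii) if there is no nonzero $x \in \mathbb{F}_q^n$ with $Q_\ell(xx^T)=0$ for all $\ell$, then every nonzero $Y \in V$ satisfies $\|Y\|_0 \ge (1+\frac1q)d^2$.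
   Context: For $Q, X \in \mathbb{F}_q^{n\times n}$, $Q(X):=\sum_{i,j}Q[i,j]X[i,j]$. $\|Y\|_0$ is the number of nonzero entries of $Y$. *)

From HB Require Import structures.
From mathcomp Require Import all_boot all_order all_algebra all_field.
Set Implicit Arguments. Unset Strict Implicit. Unset Printing Implicit Defensive.
Import Order.TTheory GRing.Theory Num.Theory.
Local Open Scope ring_scope.

Definition qeval (F : fieldType) (n : nat) (Q X : 'M[F]_n) : F :=
  \sum_(i < n) \sum_(j < n) Q i j * X i j.

Definition wt (F : fieldType) (a b : nat) (Y : 'M[F]_(a, b)) : nat :=
  #|[set ij : 'I_a * 'I_b | Y ij.1 ij.2 != 0]|.

Definition inV (F : fieldType) (N n m : nat) (G : 'M[F]_(N, n))
  (Qs : 'I_m -> 'M[F]_n) (Y : 'M[F]_N) : Prop :=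
  exists X : 'M[F]_n, X^T = X /\ (forall l, qeval (Qs l) X = 0) /\
    Y = G *m X *m G^T.

Definition is01 (F : fieldType) (n : nat) (x : 'cV[F]_n) : bool :=
  [forall i, (x i 0 == 0) || (x i 0 == 1)].

From HB Require Import structures.
From mathcomp Require Import all_boot all_order all_algebra all_field.
From mathcomp Require Import ring lra.
Set Implicit Arguments. Unset Strict Implicit. Unset Printing Implicit Defensive.
Import Order.TTheory GRing.Theory Num.Theory.
Local Open Scope ring_scope.

(* For (i), [Y := (G x)(G x)^T] lies in [V] and has weight [wt (G x) ^ 2 <= (1 + e)^2 d^2],
   with [e = 1/(9q)] and [(1 + e)^2 <= 1 + 3e].
   For (ii), write [Y = G X G^T] with [X] symmetric. [X] is not a multiple of a
   rank-one [w w^T], since such a [w] would be a common isotropic vector, so [X]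
   has two independent columns [w], [v]. The [q + 1] codewords [G (w + l v)] and
   [G v] have weight [>= d], and every coordinate in the joint support of [G w]
   and [G v] is nonzero in exactly [q] of them; hence at least [(1 + 1/q) d]
   rows of [G X] are nonzero. Each such row [r] yields the row [r G^T] of [Y],
   a nonzero codeword of weight [>= d]. *)


Section Weight.

Variable F : fieldType.

Lemma wt_sum a b (A : 'M[F]_(a, b)) :
  wt A = (\sum_(i < a) \sum_(j < b) (A i j != 0)%R)%N.
Proof.
rewrite pair_big /= /wt -sum1_card big_mkcond /=.
by apply: eq_bigr => ij _; rewrite inE; case: (_ != _).
Qed.

Lemma wt_cV a (c : 'cV[F]_a) : wt c = (\sum_(i < a) (c i 0 != 0)%R)%N.
Proof. by rewrite wt_sum; apply: eq_bigr => i _; rewrite big_ord1. Qed.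

Lemma wt_eq0 a b (A : 'M[F]_(a, b)) : (wt A == 0)%N = (A == 0).
Proof.
rewrite wt_sum sum_nat_eq0; apply/forallP/eqP => [A0|-> i]; last first.
  by rewrite sum_nat_eq0; apply/forallP => j; rewrite mxE eqxx.
apply/matrixP => i j; move: (A0 i); rewrite sum_nat_eq0 => /forallP/(_ j).
by rewrite mxE eqb0 negbK => /eqP.
Qed.

Lemma wt_tr a b (A : 'M[F]_(a, b)) : wt A^T = wt A.
Proof.
rewrite !wt_sum exchange_big; apply: eq_bigr => i _.
by apply: eq_bigr => j _; rewrite mxE.
Qed.

Lemma wt_rows a b (A : 'M[F]_(a, b)) : wt A = (\sum_(i < a) wt (row i A))%N.
Proof.
rewrite wt_sum; apply: eq_bigr => i _.
by rewrite wt_sum big_ord1; apply: eq_bigr => j _; rewrite mxE.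
Qed.

Lemma wt_mul_tr a (c : 'cV[F]_a) : wt (c *m c^T) = (wt c ^ 2)%N.
Proof.
rewrite wt_sum wt_cV expnS expn1 big_distrl /=; apply: eq_bigr => i _.
rewrite big_distrr /=; apply: eq_bigr => j _.
by rewrite !mxE big_ord1 !mxE mulf_eq0 negb_or mulnb.
Qed.

Lemma wt_row_mul_tr a b c (A : 'M[F]_(a, b)) (B : 'M[F]_(c, b)) i :
  wt (row i (A *m B^T)) = wt (B *m (row i A)^T).
Proof. by rewrite row_mul -wt_tr trmx_mul trmxK. Qed.

End Weight.

Lemma wt_mul_tr_ge (F : fieldType) N n a d (G : 'M[F]_(N, n)) (A : 'M[F]_(a, n)) :
  (forall z : 'cV_n, z != 0 -> (d <= wt (G *m z))%N) ->
  (d * #|[set i | row i A != 0%R]| <= wt (A *m G^T))%N.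
Proof.
move=> Hd; rewrite wt_rows -sum1_card big_distrr big_mkcond /=.
apply: leq_sum => i _; rewrite inE; case: ifP => // Ai0.
by rewrite muln1 wt_row_mul_tr Hd // trmx_eq0.
Qed.

Lemma sum_supp_le_nz_rows (F : fieldType) a b (A : 'M[F]_(a, b)) j k :
  (\sum_(i < a) ((A i j != 0) || (A i k != 0))%R <= #|[set i | row i A != 0%R]|)%N.
Proof.
rewrite -sum1_card [X in (_ <= X)%N]big_mkcond /=.
apply: leq_sum => i _; rewrite inE; have [Ai0|] := eqVneq (row i A) 0; last first.
  by case: (_ || _).
have entry c : A i c = 0 by move/matrixP: Ai0 => /(_ 0 c); rewrite !mxE.
by rewrite !entry eqxx.
Qed.

Lemma qevalZ (F : fieldType) n (Q X : 'M[F]_n) c : qeval Q (c *: X) = c * qeval Q X.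
Proof.
rewrite /qeval mulr_sumr; apply: eq_bigr => i _; rewrite mulr_sumr.
by apply: eq_bigr => j _; rewrite mxE mulrCA.
Qed.

Lemma sym_mx_col_multiples (F : fieldType) n (X : 'M[F]_n) i0 j :
  X^T = X -> X i0 j != 0 ->
  (forall k, col k X = (X i0 k / X i0 j) *: col j X) ->
  X = (X i0 i0 / X i0 j ^+ 2) *: (col j X *m (col j X)^T).
Proof.
move=> Xsym Xi0j Hc; have Xs a b : X a b = X b a by rewrite -{1}Xsym mxE.
have coef k a : X a k = X i0 k / X i0 j * X a j.
  by move/matrixP: (Hc k) => /(_ a 0); rewrite !mxE.
apply/matrixP => a k; rewrite !mxE big_ord1 !mxE coef Xs coef.
by field; exact: Xi0j.
Qed.

Lemma sym_mx_indep_cols (F : fieldType) n (X : 'M[F]_n) :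
  X^T = X -> (forall (lam : F) (w : 'cV_n), X != lam *: (w *m w^T)) ->
  exists j k, col k X != 0 /\ forall l : F, col j X + l *: col k X != 0.
Proof.
move=> Xsym not_rank1.
have /matrix0Pn[i0 [j Xi0j]] : X != 0 by have := not_rank1 0 0; rewrite scale0r.
set w := col j X.
have coefE k c : col k X = c *: w -> c = X i0 k / X i0 j.
  by move=> /matrixP/(_ i0 0); rewrite !mxE => ->; rewrite mulfK.
case: (boolP [exists k, col k X != (X i0 k / X i0 j) *: w]); last first.
  rewrite negb_exists => /forallP Hall.
  have Xrank1 := sym_mx_col_multiples Xsym Xi0j (fun k => eqP (negPn (Hall k))).
  by move: (not_rank1 (X i0 i0 / X i0 j ^+ 2) w); rewrite -Xrank1 eqxx.
move=> /existsP[k Hk].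
have not_mult c : col k X != c *: w.
  by apply: contra Hk => /eqP E; rewrite -(coefE k c E) E.
exists j, k; split=> [|l]; first by have := not_mult 0; rewrite scale0r.
have [->|l0] := eqVneq l 0.
  by rewrite scale0r addr0; apply/matrix0Pn; exists i0, 0; rewrite mxE.
apply: contra (not_mult (- l^-1)) => /eqP E.
have lv : l *: col k X = - w by apply/eqP; rewrite -addr_eq0 addrC E.
by rewrite -[col k X]scale1r -(mulVf l0) -scalerA lv scalerN scaleNr.
Qed.

Section Pencil.

Variable F : finFieldType.

Lemma sum_pencil_neq0 (a b : F) :
  (\sum_(l : F) (a + l * b != 0)%R + (b != 0)%R
   = #|F| * ((a != 0) || (b != 0))%R)%N.
Proof.
have [->|b0] := eqVneq b 0.
  rewrite orbF addn0; under eq_bigr do rewrite mulr0 addr0.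
  by rewrite sum_nat_const; case: (a != 0).
rewrite orbT muln1 /=.
have root_l l : (a + l * b == 0) = (l == - a / b).
  apply/eqP/eqP => [E|->]; last by field.
  by rewrite -(mulfK b0 l) -[l * b](addKr a) E addr0.
have one_root : (\sum_(l : F) (a + l * b == 0)%R = 1)%N.
  under eq_bigr do rewrite root_l.
  by rewrite -big_mkcond /= sum1_card card1.
rewrite -one_root -big_split /= -sum1_card.
by apply: eq_bigr => l _; case: (_ == _).
Qed.

Lemma pencil_support_ge N d (u v : 'cV[F]_N) :
  (forall l : F, d <= wt (u + l *: v))%N -> (d <= wt v)%N ->
  (#|F|.+1 * d <= #|F| * \sum_(i < N) ((u i 0 != 0) || (v i 0 != 0))%R)%N.
Proof.
move=> Huv Hv; rewrite big_distrr /=.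
under eq_bigr do rewrite -sum_pencil_neq0.
rewrite big_split /= exchange_big /= -wt_cV mulSn addnC leq_add //.
apply: (@leq_trans (\sum_(l : F) d)); first by rewrite sum_nat_const.
apply: leq_sum => l _; apply: leq_trans (Huv l) _.
by rewrite wt_cV; apply: eq_leq; apply: eq_bigr => i _; rewrite !mxE.
Qed.

Lemma wt_mul_mul_tr_ge N n d (G : 'M[F]_(N, n)) (X : 'M[F]_n) j k :
  (forall z : 'cV_n, z != 0 -> (d <= wt (G *m z))%N) ->
  col k X != 0 -> (forall l : F, col j X + l *: col k X != 0) ->
  (#|F|.+1 * d ^ 2 <= #|F| * wt (G *m X *m G^T))%N.
Proof.
move=> Hd v0 indep.
have mul_col c i : (G *m col c X) i 0 = (G *m X) i c.
  by rewrite !mxE; apply: eq_bigr => a _; rewrite mxE.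
have pencil_wt l : (d <= wt (G *m col j X + l *: (G *m col k X)))%N.
  by rewrite scalemxAr -mulmxDr Hd.
have := pencil_support_ge pencil_wt (Hd _ v0).
under eq_bigr do rewrite !mul_col.
move=> supp_ge.
rewrite expnS expn1 mulnA; apply: leq_trans (leq_mul supp_ge (leqnn d)) _.
rewrite -mulnA leq_mul2l mulnC; apply/orP; right.
apply: leq_trans (wt_mul_tr_ge _ Hd).
by rewrite leq_mul2l sum_supp_le_nz_rows orbT.
Qed.

End Pencil.

Lemma sqr_le_1D3e (R : realFieldType) (e D W : R) :
  0 <= e <= 1 -> 0 <= W <= (1 + e) * D -> W ^+ 2 <= (1 + 3 * e) * D ^+ 2.
Proof.
move=> /andP[e0 e1] /andP[W0 WD].
have sqr_le : W ^+ 2 <= ((1 + e) * D) ^+ 2.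
  by rewrite lerXn2r // nnegrE (le_trans W0 WD).
have : 0 <= e * (1 - e) * D ^+ 2.
  by rewrite mulr_ge0 ?sqr_ge0 // mulr_ge0 // subr_ge0.
nra.
Qed.

Lemma ler_1DV_nat (R : realFieldType) (q a b : nat) :
  (0 < q)%N -> (q.+1 * a <= q * b)%N -> (1 + 1 / q%:R) * a%:R <= b%:R :> R.
Proof.
move=> q0; rewrite -(ler_nat R) !natrM -addn1 natrD => ab.
have q0' : 0 < q%:R :> R by rewrite ltr0n.
rewrite -(ler_pM2l q0') mulrA mulrDr mulr1 mulrCA divff ?gt_eqF // mulr1.
exact: ab.
Qed.

Theorem mainTheorem8 (F : finFieldType) (N n m d : nat)
  (G : 'M[F]_(N, n)) (Qs : 'I_m -> 'M[F]_n) :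
  (1 <= d)%N ->
  (forall x : 'cV[F]_n, x != 0 ->
     (d <= wt (G *m x))%N /\
     ((wt (G *m x))%:R <= (1 + 1 / (9 * #|F|)%:R) * d%:R :> rat)) ->
  ((exists x : 'cV[F]_n, [/\ x != 0, is01 x &
       forall l, qeval (Qs l) (x *m x^T) = 0]) ->
     exists Y : 'M[F]_N, [/\ inV G Qs Y, Y != 0 &
       (wt Y)%:R <= (1 + 1 / (3 * #|F|)%:R) * (d ^ 2)%:R :> rat])
  /\
  ((~ exists x : 'cV[F]_n, x != 0 /\ forall l, qeval (Qs l) (x *m x^T) = 0) ->
     forall Y : 'M[F]_N, inV G Qs Y -> Y != 0 ->
       (1 + 1 / (#|F|)%:R) * (d ^ 2)%:R <= (wt Y)%:R :> rat).
Proof.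
move=> d_gt0 HG; have Hd z z0 := (HG z z0).1.
have q_gt0 : (0 < #|F|)%N by apply/card_gt0P; exists 0.
split.
  case=> x [x0 _ Qx]; have [wt_ge wt_le] := HG x x0.
  exists ((G *m x) *m (G *m x)^T); rewrite wt_mul_tr; split.
  - exists (x *m x^T); split; first by rewrite trmx_mul trmxK.
    by split=> //; rewrite trmx_mul !mulmxA.
  - by rewrite -wt_eq0 wt_mul_tr expn_eq0 andbT -lt0n (leq_trans d_gt0 wt_ge).
  rewrite !natrX; have -> : 1 / (3 * #|F|)%:R = 3 * (1 / (9 * #|F|)%:R) :> rat.
    by rewrite !natrM; field; rewrite pnatr_eq0 -lt0n.
  apply: sqr_le_1D3e; last by rewrite ler0n wt_le.
  have q9_gt0 : (0 < 9 * #|F|)%N by rewrite muln_gt0 q_gt0.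
  by rewrite mul1r invr_ge0 ler0n invf_le1 ?ltr0n // ler1n.
move=> no_iso Y [X [Xsym [QX ->]]] Y0.
have X0 : X != 0 by apply: contraNneq Y0 => ->; rewrite mulmx0 mul0mx.
have [|j [k [v0 indep]]] := sym_mx_indep_cols Xsym.
  move=> lam w; apply/negP => /eqP Xrank1; apply: no_iso; exists w.
  have lam0 : lam != 0 by apply: contraNneq X0 => lam0; rewrite Xrank1 lam0 scale0r.
  split; first by apply: contraNneq X0 => w0; rewrite Xrank1 w0 mul0mx scaler0.
  by move=> l; apply: (mulfI lam0); rewrite -qevalZ -Xrank1 QX mulr0.
by apply: ler_1DV_nat q_gt0 (wt_mul_mul_tr_ge Hd v0 indep).
Qed.
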